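(* Let $\mathcal{A}$ be an $[n_1,k_1,d_1]$ linear code over $\mathbb{F}_q$ (the inner code) and $\mathcal{B}$ an $[n_2,k_2,d_2]$ linear code over $\mathbb{F}_{q^{k_1}}$ (the outer code). Let $\mathcal{C}$ be the serially concatenated code of length $n=n_1n_2$ and dimension $k=k_1k_2$ over $\mathbb{F}_q$, obtained by encoding a message with $\mathcal{B}$ and then encoding each of the $n_2$ outer code symbols (viewed as a vector in $\mathbb{F}_q^{k_1}$ via a fixed $\mathbb{F}_q$-linear identification) with $\mathcal{A}$. Then the minimum distance $d$ of $\mathcal{C}$ satisfies $$d\;\le\; n_1n_2-k_1k_2+1-\left(\left\lceil \frac{k_1k_2}{n_1-d_1+1}\right\rceil-1\right)(d_1-1).$$ *)

From HB Require Import structures.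
From mathcomp Require Import all_boot all_order all_algebra all_field.
Set Implicit Arguments. Unset Strict Implicit. Unset Printing Implicit Defensive.
Import Order.TTheory GRing.Theory Num.Theory.
Local Open Scope ring_scope.

Definition wt (R : nzRingType) (n : nat) (v : 'rV[R]_n) : nat :=
  #|[set i : 'I_n | v 0 i != 0]|.

Definition is_min_dist (R : nzRingType) (n : nat) (P : 'rV[R]_n -> Prop)
  (d : nat) : Prop :=
  (exists2 c, P c & c != 0 /\ wt c = d) /\
  (forall c, P c -> c != 0 -> (d <= wt c)%N).

Definition concat_word (F : fieldType) (K : fieldExtType F) (k1 n1 n2 : nat)
  (phi : K -> 'rV[F]_k1) (encA : 'rV[F]_k1 -> 'rV[F]_n1) (b : 'rV[K]_n2)
  : 'rV[F]_(n2 * n1) :=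
  mxvec (\matrix_(j < n2) encA (phi (b 0 j))).

Definition concat_code (F : fieldType) (K : fieldExtType F) (k1 n1 n2 : nat)
  (phi : K -> 'rV[F]_k1) (encA : 'rV[F]_k1 -> 'rV[F]_n1)
  (B : {vspace 'rV[K]_n2}) : 'rV[F]_(n2 * n1) -> Prop :=
  fun c => exists2 b, b \in B & c = concat_word phi encA b.

From HB Require Import structures.
From mathcomp Require Import all_boot all_order all_algebra all_field.
From mathcomp Require Import zify.
Set Implicit Arguments.
Unset Strict Implicit.
Unset Printing Implicit Defensive.
Import Order.TTheory GRing.Theory Num.Theory.
Local Open Scope ring_scope.

(* Let t = n1 - d1 + 1, k = k1 k2 and m = ceil(k / t) - 1, so that m t < k.
   Prescribe zeros at the first t coordinates of each of the first m inner
   blocks and at k - 1 - m t further coordinates outside these blocks.  These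
   are fewer than k conditions, so by pigeonhole on the q^k messages some
   nonzero codeword meets them.  An inner codeword vanishing on t coordinates
   is zero, so the first m blocks vanish entirely and the codeword has weight
   at most n1 n2 - m n1 - (k - 1 - m t) = n1 n2 - k + 1 - m (d1 - 1). *)

Lemma card_ord_lt n t : (t <= n)%N -> #|[set i : 'I_n | (i < t)%N]| = t.
Proof.
move=> le_tn; have widen_inj : injective (widen_ord le_tn).
  by move=> i j /(congr1 val) eq_ij; apply: val_inj.
rewrite -[RHS]card_ord -(card_imset _ widen_inj).
apply: eq_card => i; rewrite inE; apply/idP/imsetP => [lt_it | [j _ ->]].
  by exists (Ordinal lt_it) => //; apply: val_inj.
by rewrite /= ltn_ord.
Qed.

Lemma exists_subset_card {T : finType} (A : {set T}) r :
  (r <= #|A|)%N -> exists2 E : {set T}, E \subset A & #|E| = r.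
Proof.
case/card_geqP=> s [uniq_s size_s sub_sA]; exists [set x in s].
  by apply/subsetP=> x; rewrite inE => /sub_sA.
by rewrite cardsE (card_uniqP uniq_s).
Qed.

Lemma exists_collision {T U : finType} (f : T -> U) :
  (#|U| < #|T|)%N -> exists x, exists2 y, x != y & f x = f y.
Proof.
move=> lt_UT; apply/injectivePn; apply: contraTN lt_UT.
by move=> /injectiveP/leq_card; rewrite -leqNgt.
Qed.

Lemma wt_mxvec (R : nzRingType) m n (M : 'M[R]_(m, n)) :
  wt (mxvec M) = #|[set x : 'I_m * 'I_n | M x.1 x.2 != 0]|.
Proof.
have idx_inj : injective (uncurry (@mxvec_index m n)).
  move=> [i j] [i' j'] /(congr1 (enum_val \o cast_ord (esym (mxvec_cast m n)))).
  by rewrite /= !cast_ordK !enum_rankK.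
rewrite /wt -(card_imset _ idx_inj); apply: eq_card => k.
by case/mxvec_indexP: k => i j; rewrite (mem_imset _ (i, j) idx_inj) !inE mxvecE.
Qed.

Section MinimumDistance.

Variables (R : nzRingType) (n d : nat) (P : 'rV[R]_n -> Prop).
Hypothesis distP : is_min_dist P d.

Lemma min_dist_bounds : (0 < d <= n)%N.
Proof.
case: distP => [[c _ [nz_c <-]] _]; rewrite /wt.
rewrite card_gt0 (leq_trans (max_card _)) ?card_ord // andbT.
apply: contraNneq nz_c => c0.
by apply/eqP/rowP=> j; apply/eqP; move: (in_set0 j); rewrite -c0 inE mxE => /negbFE.
Qed.

Lemma min_dist_vanish (T : {set 'I_n}) c :
  P c -> (n - d < #|T|)%N -> (forall i, i \in T -> c 0 i = 0) -> c = 0.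
Proof.
move=> Pc lt_T cT; apply/eqP; apply/negPn/negP=> nz_c.
have : (wt c <= #|~: T|)%N.
  apply/subset_leq_card/subsetP=> i; rewrite !inE.
  by apply: contraNN => /cT ->.
have := cardsC T; have := distP.2 c Pc nz_c; rewrite card_ord; lia.
Qed.

End MinimumDistance.

Arguments min_dist_vanish {R n d P} distP T {c}.

Lemma min_dist_singleton {F : finFieldType} {k n d} {C : 'rV[F]_n -> Prop}
    {enc : {linear 'rV[F]_k -> 'rV[F]_n}} :
  injective enc -> (forall u, C (enc u)) -> is_min_dist C d ->
  (k <= n - d + 1)%N.
Proof.
move=> enc_inj encC distC; have /andP[d_gt0 d_le] := min_dist_bounds distC.
have le_tn : (n - d + 1 <= n)%N by lia.
pose prefix u : 'rV[F]_(n - d + 1) := \row_j enc u 0 (widen_ord le_tn j).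
have prefix_inj : injective prefix.
  move=> u u' eq_uu'; apply/enc_inj/eqP; rewrite -subr_eq0 -linearB; apply/eqP.
  apply: (min_dist_vanish distC [set i : 'I_n | (i < n - d + 1)%N] (encC _)).
    by rewrite card_ord_lt //; lia.
  move=> i; rewrite inE => lt_i.
  have := congr1 (fun r : 'rV_(n - d + 1) => r 0 (Ordinal lt_i)) eq_uu'.
  rewrite !mxE; have -> : widen_ord le_tn (Ordinal lt_i) = i by apply: val_inj.
  by rewrite linearB !mxE => ->; rewrite subrr.
have := leq_card prefix prefix_inj.
by rewrite !card_mx !mul1n leq_exp2l // finNzRing_gt1.
Qed.

Section Concatenation.

Variables (F : finFieldType) (K : fieldExtType F) (n1 k1 d1 n2 : nat).
Variables (phi : {linear K -> 'rV[F]_k1}) (encA : {linear 'rV[F]_k1 -> 'rV[F]_n1}).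
Hypotheses (phi_bij : bijective phi) (encA_inj : injective encA).
Variable B : {vspace 'rV[K]_n2}.

Definition concat_array (b : 'rV[K]_n2) : 'M[F]_(n2, n1) :=
  \matrix_(j < n2) encA (phi (b 0 j)).

Lemma concat_arrayB (b b' : 'rV[K]_n2) :
  concat_array (b - b') = concat_array b - concat_array b'.
Proof. by apply/matrixP=> i j; rewrite !mxE !linearB /= !mxE. Qed.

Lemma concat_word_eq0 (b : 'rV[K]_n2) : (concat_word phi encA b == 0) = (b == 0).
Proof.
rewrite mxvec_eq0; apply/eqP/eqP=> [arr0 | ->]; last first.
  by apply/matrixP=> i j; rewrite !mxE !linear0 mxE.
apply/rowP=> j; have := congr1 (row j) arr0; rewrite rowK row0 mxE.
by rewrite -(linear0 encA) => /encA_inj; rewrite -(linear0 phi) => /(bij_inj phi_bij).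
Qed.

Definition outer_encoder (g : 'rV[F]_k1 -> K) (u : 'M[F]_(\dim B, k1)) :
  'rV[K]_n2 :=
  \sum_(i < \dim B) g (row i u) *: (vbasis B)`_i.

Lemma outer_encoder_mem g u : outer_encoder g u \in B.
Proof. by apply: memv_suml => i _; rewrite memvZ // vbasis_mem // mem_nth ?size_tuple. Qed.

Lemma outer_encoder_inj g : injective g -> injective (outer_encoder g).
Proof.
move=> g_inj u u' eq_uu'; apply/row_matrixP=> i; apply: g_inj; apply/eqP.
rewrite -subr_eq0; apply/eqP; move: i.
move/freeP: (basis_free (vbasisP B)); apply.
rewrite -[RHS](subrr (outer_encoder g u)) {2}eq_uu' -sumrB.
by apply: eq_bigr => i _; rewrite scalerBl.
Qed.

Lemma concat_array_vanishing (S : {set 'I_n2 * 'I_n1}) :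
  (#|S| < k1 * \dim B)%N ->
  exists2 b, b \in B & b != 0 /\ {in S, forall x, concat_array b x.1 x.2 = 0}.
Proof.
case: phi_bij => g phiK gK lt_S.
pose restr u : 'rV[F]_#|S| :=
  \row_l concat_array (outer_encoder g u) (enum_val l).1 (enum_val l).2.
have [|u [u' neq_uu' eq_restr]] := exists_collision restr.
  by rewrite !card_mx !mul1n ltn_exp2l ?finNzRing_gt1 // mulnC.
exists (outer_encoder g u - outer_encoder g u').
  by rewrite memvB ?outer_encoder_mem.
split; first by rewrite subr_eq0 (inj_eq (outer_encoder_inj (can_inj gK))).
move=> x xS; have := congr1 (fun r : 'rV_#|S| => r 0 (enum_rank_in xS x)) eq_restr.
by rewrite concat_arrayB !mxE enum_rankK_in // => ->; rewrite subrr.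
Qed.

Variable A : {vspace 'rV[F]_n1}.
Hypotheses (encA_mem : forall u, encA u \in A)
  (distA : is_min_dist (fun c => c \in A) d1).

Lemma concat_row_eq0 b i :
  (forall j : 'I_n1, (j < n1 - d1 + 1)%N -> concat_array b i j = 0) ->
  row i (concat_array b) = 0.
Proof.
move=> vanish; have /andP[d1_gt0 d1_le] := min_dist_bounds distA.
rewrite rowK; apply: (min_dist_vanish distA [set j : 'I_n1 | (j < n1 - d1 + 1)%N]).
- exact: encA_mem.
- by rewrite card_ord_lt; lia.
- by move=> j; rewrite inE => /vanish; rewrite mxE.
Qed.

Lemma concat_array_vanishing_rows m (E : {set 'I_n2 * 'I_n1}) :
  (m <= n2)%N -> (m * (n1 - d1 + 1) + #|E| < k1 * \dim B)%N ->
  exists2 b, b \in B &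
    b != 0 /\ {in [set x : 'I_n2 * 'I_n1 | (x.1 < m)%N] :|: E,
                forall x, concat_array b x.1 x.2 = 0}.
Proof.
set t := (n1 - d1 + 1)%N => le_m lt_k.
have /andP[d1_gt0 d1_le] := min_dist_bounds distA.
pose block := [set x : 'I_n2 * 'I_n1 | (x.1 < m) && (x.2 < t)]%N.
have card_block : #|block| = (m * t)%N.
  have -> : block = setX [set i : 'I_n2 | (i < m)%N] [set j : 'I_n1 | (j < t)%N].
    by apply/setP=> -[i j]; rewrite !inE.
  by rewrite cardsX !card_ord_lt //; lia.
have [|b bB [nz_b b0]] := concat_array_vanishing (S := block :|: E).
  by rewrite (leq_ltn_trans (leq_card_setU _ _)) // card_block.
exists b => //; split=> // x; rewrite !inE => /orP[lt_xm | xE].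
  have vanish (j : 'I_n1) : (j < t)%N -> concat_array b x.1 j = 0.
    by move=> lt_jt; apply: (b0 (x.1, j)); rewrite !inE lt_xm lt_jt.
  have := congr1 (fun r : 'rV_n1 => r 0 x.2) (concat_row_eq0 vanish).
  by rewrite !mxE.
by apply: b0; rewrite inE xE orbT.
Qed.

Lemma concat_low_weight_word m :
  (m * (n1 - d1 + 1) < k1 * \dim B)%N ->
  exists2 c, concat_code phi encA B c &
    c != 0 /\ (wt c + m * (d1 - 1) + k1 * \dim B <= n1 * n2 + 1)%N.
Proof.
set t := (n1 - d1 + 1)%N => lt_mt_k.
have /andP[d1_gt0 d1_le] := min_dist_bounds distA.
have t_gt0 : (0 < t)%N by rewrite /t addn1.
have k1_le_t : (k1 <= t)%N := min_dist_singleton encA_inj encA_mem distA.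
have dimB_le : (\dim B <= n2)%N.
  by move: (dimvS (subvf B)); rewrite dimvf dim_matrix mul1r.
have lt_m_dimB : (m < \dim B)%N.
  rewrite -(ltn_pmul2r t_gt0); apply: (leq_trans lt_mt_k).
  by rewrite [X in (_ <= X)%N]mulnC leq_mul2r k1_le_t orbT.
have le_m_n2 : (m <= n2)%N := leq_trans (ltnW lt_m_dimB) dimB_le.
pose top := [set x : 'I_n2 * 'I_n1 | (x.1 < m)%N].
have card_top : #|top| = (m * n1)%N.
  have -> : top = setX [set i : 'I_n2 | (i < m)%N] setT.
    by apply/setP=> -[i j]; rewrite !inE andbT.
  by rewrite cardsX card_ord_lt ?cardsT ?card_ord.
have card_ntop : #|~: top| = ((n2 - m) * n1)%N.
  by have := cardsC top; rewrite card_prod !card_ord card_top mulnBl; lia.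
have [|E E_sub card_E] :=
  exists_subset_card (A := ~: top) (r := k1 * \dim B - 1 - m * t).
  have k1_le_n1 : (k1 <= n1)%N by lia.
  have := leq_mul k1_le_n1 (leq_sub2r m dimB_le).
  have : (k1 * m <= m * t)%N by rewrite mulnC leq_mul2l k1_le_t orbT.
  rewrite card_ntop mulnBr; lia.
have [|b bB [nz_b b0]] := concat_array_vanishing_rows (E := E) le_m_n2.
  by rewrite card_E; lia.
have card_zero : #|top :|: E| = (m * n1 + (k1 * \dim B - 1 - m * t))%N.
  rewrite cardsU card_top card_E (_ : top :&: E = set0) ?cards0 ?subn0 //.
  by move: E_sub; rewrite subsets_disjoint setCK disjoint_sym => /disjoint_setI0.
exists (concat_word phi encA b); first by exists b.
split; first by rewrite concat_word_eq0.
have : (wt (concat_word phi encA b) <= #|~: (top :|: E)|)%N.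
  rewrite wt_mxvec; apply/subset_leq_card/subsetP=> x; rewrite inE in_setC.
  by apply: contraNN => /b0 ->.
have := cardsC (top :|: E); rewrite card_prod !card_ord card_zero.
have : (m * t + m * (d1 - 1) = m * n1)%N by rewrite -mulnDr; congr (_ * _); lia.
clearbody t; lia.
Qed.

End Concatenation.

Lemma ceil_divB1_nat (R : archiRealFieldType) (k t : nat) :
  (0 < t)%N -> (0 < k)%N ->
  exists2 m : nat, Num.ceil (k%:R / t%:R : R) - 1 = m%:Z & (m * t < k)%N.
Proof.
move=> t_gt0 k_gt0; have := ceilB1_lt (k%:R / t%:R : R).
have : 0 <= Num.ceil (k%:R / t%:R : R) - 1.
  by rewrite subr_ge0 -gtz0_ge1 ceil_gt0 divr_gt0 ?ltr0n.
case: (Num.ceil _ - 1) => // m _; rewrite ltr_pdivlMr ?ltr0n // => lt_m.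
by exists m; rewrite // -(ltr_nat R) natrM.
Qed.

Theorem mainTheorem9
  (F : finFieldType) (K : fieldExtType F)
  (n1 k1 d1 n2 k2 d2 : nat)
  (A : {vspace 'rV[F]_n1})
  (encA : {linear 'rV[F]_k1 -> 'rV[F]_n1})
  (encA_inj : injective encA)
  (encA_im : forall c, c \in A <-> exists u, c = encA u)
  (dimA : \dim A = k1)
  (distA : is_min_dist (fun c => c \in A) d1)
  (phi : {linear K -> 'rV[F]_k1}) (phi_bij : bijective phi)
  (B : {vspace 'rV[K]_n2})
  (dimB : \dim B = k2)
  (distB : is_min_dist (fun c => c \in B) d2)
  (d : nat)
  (distC : is_min_dist (concat_code phi encA B) d) :
  (d%:Z <= (n1 * n2)%:Z - (k1 * k2)%:Z + 1
     - (Num.ceil ((k1 * k2)%:R / (n1 - d1 + 1)%:R : rat) - 1) * (d1%:Z - 1))%R.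
Proof.
have /andP[d1_gt0 _] := min_dist_bounds distA.
have /andP[_ d_le] := min_dist_bounds distC.
have encA_mem u : encA u \in A by apply/encA_im; exists u.
have [k0 | k_gt0] := posnP (k1 * k2).
  by rewrite k0 mulr0n mul0r ceil0; lia.
have [m -> lt_m] := ceil_divB1_nat rat (t := n1 - d1 + 1) (leq_addl _ _) k_gt0.
subst k2; have [c cC [nz_c wt_c]] :=
  concat_low_weight_word phi_bij encA_inj encA_mem distA lt_m.
have := distC.2 c cC nz_c; nia.
Qed.
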